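(* Let $A$ be a Frobenius algebra over a field $\mathbb{k}$. Then $\dim_{\mathbb{k}}A=\operatorname{Frobdim}A$.
   Context: A Frobenius algebra over a field $\mathbb{k}$ is a finite-dimensional associative unital $\mathbb{k}$-algebra $A$ with a nondegenerate bilinear form $B:A\times A\to\mathbb{k}$ with $B(ab,c)=B(a,bc)$. The Frobenius space $\mathcal{E}_A$ is the $\mathbb{k}$-vector space of all $\mathbb{k}$-linear maps $\Delta:A\to A\otimes_{\mathbb{k}}A$ that are $A$-bimodule homomorphisms (with $a(x\otimes y)b=ax\otimes yb$), and $\operatorname{Frobdim}A=\dim_{\mathbb{k}}\mathcal{E}_A$. *)

From HB Require Import structures.
From mathcomp Require Import all_boot all_order all_algebra all_field.
Set Implicit Arguments. Unset Strict Implicit. Unset Printing Implicit Defensive.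
Import GRing.Theory.
Local Open Scope ring_scope.

Definition frobenius_form (K : fieldType) (A : falgType K) (B : A -> A -> K^o) :=
  [/\ (forall a, linear (B a)),
      (forall b, linear (fun a => B a b)),
      (forall a, (forall b, B a b = 0) -> a = 0),
      (forall b, (forall a, B a b = 0) -> b = 0)
    & (forall a b c, B (a * b) c = B a (b * c))].

(* Tensor product A (x)_K A, realised (A finite-dimensional) as
   Hom_K(A^*, A), with x (x) y := (f |-> f x *: y). *)
Definition tens (K : fieldType) (A : falgType K) : vectType K :=
  'Hom('Hom(A, K^o), A).

Definition tensor (K : fieldType) (A : falgType K) (x y : A) : tens A :=
  linfun (fun f : 'Hom(A, K^o) => f x *: y).

(* Bimodule actions: a.(x (x) y) = (a x) (x) y ;  (x (x) y).b = x (x) (y b). *)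
Definition tens_lact (K : fieldType) (A : falgType K) (a : A) (t : tens A)
  : tens A := linfun (fun f : 'Hom(A, K^o) => t (f \o amull a)%VF).

Definition tens_ract (K : fieldType) (A : falgType K) (t : tens A) (b : A)
  : tens A := linfun (fun f : 'Hom(A, K^o) => t f * b).

Definition is_bimod_hom (K : fieldType) (A : falgType K) (D : 'Hom(A, tens A)) :=
  (forall a x, D (a * x) = tens_lact a (D x)) /\
  (forall x b, D (x * b) = tens_ract (D x) b).

From HB Require Import structures.
From mathcomp Require Import all_boot all_order all_algebra all_field.
Local Open Scope ring_scope.
Import GRing.Theory.
Set Implicit Arguments. Unset Strict Implicit.

(* A bimodule homomorphism D : A -> A (x) A is determined by t := D 1 through
   D x = x.t, and t is central (b.t = t.b); conversely every central t gives
   one.  Model A (x) A as Hom(A^*, A) and identify A with A^* by a |-> B(a,-).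
   Associativity of B says B(b,-) = B(1, b -), so a central t satisfies
   t(B(b,-)) = t(B(1,-)) b: it is determined by c := t(B(1,-)), and it is the
   element sum_i e_i (x) c e^i for B-dual bases (e_i), (e^i).  All these
   elements are central, so the Frobenius space is isomorphic to A. *)

Lemma linfun_linE (K : fieldType) (aT rT : vectType K) (f : aT -> rT) :
  linear f -> linfun f =1 f.
Proof.
move=> f_lin x.
pose F : {linear aT -> rT} :=
  HB.pack f (GRing.isSemilinear.Build K aT rT _ f (GRing.semilinear_linear f_lin)).
exact: (lfunE F x).
Qed.

Section TensorBimodule.
Variables (K : fieldType) (A : falgType K).

Lemma tens_lactE a (t : tens A) f : tens_lact a t f = t (f \o amull a)%VF.
Proof.
by rewrite linfun_linE // => k f1 f2; rewrite comp_lfunDl -comp_lfunZl linearP.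
Qed.

Lemma tens_ractE (t : tens A) b f : tens_ract t b f = t f * b.
Proof. by rewrite linfun_linE // => k f1 f2; rewrite linearP mulrDl scalerAl. Qed.

Lemma tens_lact1 (t : tens A) : tens_lact 1 t = t.
Proof.
apply/lfunP => f; rewrite tens_lactE; congr (t _).
by apply/lfunP => y; rewrite comp_lfunE lfunE /= mul1r.
Qed.

Lemma tens_lactM a b (t : tens A) : tens_lact (a * b) t = tens_lact a (tens_lact b t).
Proof.
apply/lfunP => f; rewrite !tens_lactE; congr (t _).
by apply/lfunP => y; rewrite !comp_lfunE !lfunE /= mulrA.
Qed.

Lemma tens_lact_ract a (t : tens A) b :
  tens_lact a (tens_ract t b) = tens_ract (tens_lact a t) b.
Proof. by apply/lfunP => f; rewrite !(tens_lactE, tens_ractE). Qed.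

Lemma tens_lact_linear (t : tens A) : linear (fun a : A => tens_lact a t).
Proof.
move=> k a b; apply/lfunP => f.
rewrite add_lfunE scale_lfunE !tens_lactE linearP /= comp_lfunDr -comp_lfunZr.
by rewrite linearP.
Qed.

Definition tens_central (t : tens A) := forall b, tens_lact b t = tens_ract t b.

Definition lact_hom (t : tens A) : 'Hom(A, tens A) := linfun (fun a : A => tens_lact a t).

Lemma lact_homE t x : lact_hom t x = tens_lact x t.
Proof. exact/linfun_linE/tens_lact_linear. Qed.

Lemma lact_hom_bimod t : tens_central t -> is_bimod_hom (lact_hom t).
Proof.
move=> t_central; split=> [a x | x b]; rewrite !lact_homE tens_lactM //.
by rewrite t_central tens_lact_ract.
Qed.

Lemma bimod_hom_central D : is_bimod_hom D -> tens_central (D 1).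
Proof. by case=> Dl Dr b; rewrite -Dl -Dr mulr1 mul1r. Qed.

Lemma bimod_hom_lact1 D : is_bimod_hom D -> D = lact_hom (D 1).
Proof. by case=> Dl _; apply/lfunP => x; rewrite lact_homE -Dl mulr1. Qed.

End TensorBimodule.

Arguments tens_central {K A} t.
Arguments lact_hom {K A} t.

Section FrobeniusSpace.
Variables (K : fieldType) (A : falgType K) (B : A -> A -> K^o).
Hypotheses (B_linr : forall a, linear (B a)) (B_linl : forall b, linear (B^~ b)).
Hypothesis B_nondeg : forall a, (forall b, B a b = 0) -> a = 0.
Hypothesis B_assoc : forall a b c, B (a * b) c = B a (b * c).

Definition form_dual : 'Hom(A, 'Hom(A, K^o)) := linfun (fun a => linfun (B a)).

Lemma form_dualE a y : form_dual a y = B a y.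
Proof.
rewrite linfun_linE; first by rewrite linfun_linE.
move=> k a1 a2; apply/lfunP => z.
by rewrite add_lfunE scale_lfunE !linfun_linE //; apply: B_linl.
Qed.

Lemma form_dual_inj : lker form_dual == 0%VS.
Proof.
apply/lker0P => a1 a2 eq_a; apply/eqP; rewrite -subr_eq0; apply/eqP.
by apply: B_nondeg => y; rewrite -form_dualE linearB /= eq_a subrr lfunE.
Qed.

Lemma form_dual_limg : limg form_dual = fullv.
Proof.
apply/eqP; rewrite eqEdim subvf limg_dim_eq ?(eqP form_dual_inj) ?capv0 //.
by rewrite !dimvf /= (eq_leq (muln1 _)).
Qed.

Notation form_dualV := (form_dual^-1)%VF.

Lemma form_dualVK f : form_dual (form_dualV f) = f.
Proof. by rewrite limg_lfunVK // form_dual_limg memvf. Qed.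

Lemma form_dualK a : form_dualV (form_dual a) = a.
Proof. exact: lker0_lfunK form_dual_inj a. Qed.

Lemma form_dual_amull a : form_dual a = (form_dual 1 \o amull a)%VF.
Proof.
by apply/lfunP => y; rewrite comp_lfunE lfunE /= !form_dualE -B_assoc mul1r.
Qed.

Lemma form_dualV_amull f a : form_dualV (f \o amull a)%VF = form_dualV f * a.
Proof.
apply: (lker0P form_dual_inj); rewrite form_dualVK; apply/lfunP => y.
by rewrite form_dualE comp_lfunE lfunE /= B_assoc -form_dualE form_dualVK.
Qed.

(* [casimir c] is sum_i e_i (x) c e^i for dual bases B(e^i, e_j) = d_ij. *)
Definition casimir (c : A) : tens A := linfun (fun f => c * form_dualV f).

Lemma casimirE c f : casimir c f = c * form_dualV f.
Proof. by rewrite linfun_linE // => k f1 f2; rewrite linearP mulrDr scalerAr. Qed.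

Lemma casimir_linear : linear casimir.
Proof.
move=> k c d; apply/lfunP => f.
by rewrite add_lfunE scale_lfunE !casimirE mulrDl scalerAl.
Qed.

Lemma casimir_central c : tens_central (casimir c).
Proof.
move=> b; apply/lfunP => f.
by rewrite tens_lactE tens_ractE !casimirE form_dualV_amull mulrA.
Qed.

Lemma casimir_form_dual1 c : casimir c (form_dual 1) = c.
Proof. by rewrite casimirE form_dualK mulr1. Qed.

Lemma central_casimir t : tens_central t -> t = casimir (t (form_dual 1)).
Proof.
move=> t_central; apply/lfunP => f; rewrite casimirE -[in LHS](form_dualVK f).
by rewrite form_dual_amull -tens_lactE t_central tens_ractE.
Qed.

Definition frob_delta : 'Hom(A, 'Hom(A, tens A)) := linfun (lact_hom \o casimir).

Lemma frob_deltaE c : frob_delta c = lact_hom (casimir c).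
Proof.
rewrite linfun_linE // => k c1 c2; apply/lfunP => x.
apply/lfunP => f; rewrite add_lfunE scale_lfunE !lact_homE add_lfunE scale_lfunE.
by rewrite !tens_lactE casimir_linear add_lfunE scale_lfunE.
Qed.

Lemma frob_delta_inj : lker frob_delta == 0%VS.
Proof.
apply/lker0P => c d /(congr1 (fun D : 'Hom(A, tens A) => D 1 (form_dual 1))).
by rewrite /= !frob_deltaE !lact_homE !tens_lact1 !casimir_form_dual1.
Qed.

Lemma mem_frob_delta D : D \in limg frob_delta <-> is_bimod_hom D.
Proof.
split=> [/memv_imgP[c _ ->] | D_bimod].
  by rewrite frob_deltaE; apply/lact_hom_bimod/casimir_central.
apply/memv_imgP; exists (D 1 (form_dual 1)); first exact: memvf.
rewrite frob_deltaE -central_casimir; first exact: bimod_hom_lact1.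
exact: bimod_hom_central.
Qed.

End FrobeniusSpace.

Theorem corollary9 (K : fieldType) (A : falgType K) (B : A -> A -> K^o) :
  frobenius_form B ->
  exists E : {vspace 'Hom(A, tens A)},
    (forall D : 'Hom(A, tens A), D \in E <-> is_bimod_hom D) /\
    \dim E = \dim {:A}.
Proof.
case=> B_linr B_linl B_nondeg _ B_assoc.
exists (limg (frob_delta B)); split; first exact: mem_frob_delta.
by rewrite limg_dim_eq // (eqP (frob_delta_inj B_linr B_linl B_nondeg)) capv0.
Qed.
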